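(* If a depth-proper mttr $M$ is finite-nesting, then $M$ is LSHI, i.e., there is $b\in\mathbb N$ with $H(M(t))\le b\cdot|t|$ for all input trees $t$.
   Context: Trees: for a ranked alphabet $\Sigma$, $T_\Sigma$ is the set of finite ranked ordered trees over $\Sigma$, and $T_\Sigma(A)$ the trees over $\Sigma$ with additional rank-0 symbols from $A$. $X_k=\{x_1,\dots,x_k\}$ are input variables and $Y=\{y_1,y_2,\dots\}$, $Y_m=\{y_1,\dots,y_m\}$ are parameters. A (deterministic bottom-up) tree automaton $(P,\Sigma,h)$ has a finite state set $P$ and maps $h_\sigma:P^k\to P$ for $\sigma\in\Sigma^{(k)}$; $\hat h:T_\Sigma\to P$ is its run and $L_p=\{s\in T_\Sigma\mid \hat h(s)=p\}$. A (total, deterministic) macro tree transducer with look-ahead (mttr) is $M=(Q,P,\Sigma,\Delta,q_0,R,h)$ where $Q$ is a ranked alphabet of states, $\Sigma,\Delta$ are ranked input/output alphabets, $(P,\Sigma,h)$ is a tree automaton (the look-ahead), $q_0\in Q^{(0)}$, and for each $q\in Q^{(m)}$, $\sigma\in\Sigma^{(k)}$, $p_1,\dots,p_k\in P$ there is exactly one rule $\langle q,\sigma(x_1:p_1,\dots,x_k:p_k)\rangle(y_1,\dots,y_m)\to t$ with $t\in T_{\Delta\cup\langle Q,X_k\rangle}(Y_m)$, where $\langle q',x_i\rangle$ has the rank of $q'$. For $q\in Q^{(m)}$ and $s=\sigma(s_1,\dots,s_k)$, $M_q(s)\in T_\Delta(Y_m)$ is obtained from the right-hand side of the rule for $(q,\sigma,\hat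 h(s_1),\dots,\hat h(s_k))$ by replacing (recursively, innermost first) each subtree $\langle q',x_i\rangle(\xi_1,\dots,\xi_n)$ by $M_{q'}(s_i)$ with each $y_j$ replaced by (the result for) $\xi_j$; $M(s)=M_{q_0}(s)$. Extension and reachability: $\hat M$ is the mttr with input alphabet $\Sigma\cup P$ (each $p\in P$ a rank-0 input symbol with $\hat h_p()=p$), output alphabet $\Delta\cup\langle Q,P\rangle$ (where $\langle q,p\rangle$ has the rank of $q$), the rules of $M$ plus the rules $\langle q,p\rangle(y_1,\dots,y_m)\to\langle q,p\rangle(y_1,\dots,y_m)$ for $q\in Q^{(m)}$, $p\in P$. A pair $\langle q,p\rangle$ is reachable if it occurs in $\hat M(s)$ for some $s\in T_\Sigma(P)$. Depth-proper: for $y\in Y$ and $s\in T_\Delta(Y)$, $\lfloor s\rfloor_y$ is obtained from $s$ by replacing every maximal subtree not containing $y$ by a new rank-0 symbol $\$$. $M$ is depth-proper if for every reachable $\langle q,p\rangle$ with $q\in Q^{(m)}$ and every $y\in Y_m$, the set $\{\lfloor M_q(s)\rfloor_y\mid s\in L_p\}$ is infinite. Size and height: $|t|$ is the number of nodes of $t$; the height $H(t)$ is the number of nodes on a longest root-to-leaf path. Nesting: for $t\in T_\Sigma(P)$, the nesting of a root-to-leaf path of $\hat M(t)$ is the number of its nodes labeled by symbols of $\langle Q,P\rangle$. $M$ is finite-nesting if there is $b\in\mathbb N$ such that for every $t\in T_\Sigma(P)$ containing exactly one leaf labeled by a symbol of $P$, every root-to-leaf path of $\hat M(t)$ has nesting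 at most $b$. *)

From mathcomp Require Import all_boot.
From Stdlib Require List.

Set Implicit Arguments.
Unset Strict Implicit.
Unset Printing Implicit Defensive.

Inductive tree (A : Type) : Type := Node of A & seq (tree A).
Arguments Node {A} _ _.

Fixpoint tmap (A B : Type) (f : A -> B) (t : tree A) : tree B :=
  match t with Node a ts => Node (f a) (map (tmap f) ts) end.

Fixpoint wf (A : Type) (rk : A -> nat) (t : tree A) : bool :=
  match t with Node a ts => (size ts == rk a) && all (wf rk) ts end.

Fixpoint tsize (A : Type) (t : tree A) : nat :=
  match t with Node _ ts => (sumn (map (@tsize A) ts)).+1 end.

Fixpoint height (A : Type) (t : tree A) : nat :=
  match t with Node _ ts => (foldr maxn 0 (map (@height A) ts)).+1 end.

Fixpoint has_label (A : Type) (f : A -> bool) (t : tree A) : bool :=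
  match t with Node a ts => f a || has (has_label f) ts end.

Fixpoint count_label (A : Type) (f : A -> bool) (t : tree A) : nat :=
  match t with Node a ts => f a + sumn (map (count_label f) ts) end.

Fixpoint paths (A : Type) (t : tree A) : seq (seq A) :=
  match t with
  | Node a [::] => [:: [:: a]]
  | Node a ts => map (cons a) (flatten (map (@paths A) ts))
  end.

Record ranked := Ranked { sym : finType; rk : sym -> nat }.

(* labels of right-hand sides: output symbols of Delta, calls <q', x_i>
   (child index i is 0-based, i.e. x_{i+1}), and parameters y_{j+1}. *)
Inductive rlab (D Q : ranked) : Type :=
  | RD of sym D
  | RQ of sym Q & nat
  | RY of nat.
Arguments RD {D Q} _.
Arguments RQ {D Q} _ _.
Arguments RY {D Q} _.

(* well-formed rhs for a rule with k input variables and m parameters: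
   t in T_{Delta u <Q,X_k>}(Y_m) *)
Fixpoint wf_rhs (D Q : ranked) (k m : nat) (t : tree (rlab D Q)) : bool :=
  match t with
  | Node (RD d) ts => (size ts == rk d) && all (wf_rhs k m) ts
  | Node (RQ q i) ts => (i < k) && (size ts == rk q) && all (wf_rhs k m) ts
  | Node (RY j) ts => (j < m) && (size ts == 0)
  end.

(* A total deterministic macro tree transducer with look-ahead
   M = (Q, P, Sigma, Delta, q0, R, h). *)
Record mttr (Sg D : ranked) := Mttr {
  st : ranked;
  la : finType;
  lah : sym Sg -> seq la -> la;
  q0 : sym st;
  rules : sym st -> sym Sg -> seq la -> tree (rlab D st);
                         (* rhs of <q, sigma(x_1:p_1,..,x_k:p_k)>(y_1..y_m) *)
  q0_rk : rk q0 = 0;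
  rules_wf : forall q a ps, size ps = rk a -> wf_rhs (rk a) (rk q) (rules q a ps)
}.
Arguments st {Sg D} _.
Arguments la {Sg D} _.
Arguments lah {Sg D} _ _ _.
Arguments q0 {Sg D} _.
Arguments rules {Sg D} _ _ _ _.

(* Output labels of hat M: Delta, <Q,P>, parameters y_{j+1}. *)
Inductive olab (D Q : ranked) (P : Type) : Type :=
  | OD of sym D
  | OQP of sym Q & P
  | OY of nat.
Arguments OD {D Q P} _.
Arguments OQP {D Q P} _ _.
Arguments OY {D Q P} _.

Section Semantics.
Variables (Sg D : ranked) (M : mttr Sg D).
Local Notation Q := (sym (st M)).
Local Notation P := (la M).
Local Notation otree := (tree (olab D (st M) P)).

(* input trees of hat M: T_{Sigma u P}, P-symbols of rank 0 *)
Definition itree := tree (sym Sg + P)%type.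

Definition ilab_rk (x : sym Sg + P) : nat :=
  match x with inl a => rk a | inr _ => 0 end.

Fixpoint run (t : itree) : P :=
  match t with
  | Node (inl a) ts => lah M a (map run ts)
  | Node (inr p) _ => p
  end.

Fixpoint subst (f : nat -> otree) (t : otree) : otree :=
  match t with
  | Node (OY j) _ => f j
  | Node l ts => Node l (map (subst f) ts)
  end.

Definition yleaf (j : nat) : otree := Node (OY j) [::].

(* evaluation of a right-hand side, given the translations Ms of the
   direct subtrees (Ms`_i q' = M_{q'}(s_{i+1})) *)
Fixpoint evalr (Ms : seq (Q -> otree)) (r : tree (rlab D (st M))) : otree :=
  match r with
  | Node (RD d) ts => Node (OD d) (map (evalr Ms) ts)
  | Node (RY j) _ => yleaf j
  | Node (RQ q i) ts =>
      subst (fun j => nth (yleaf j) (map (evalr Ms) ts) j)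
            (nth (fun _ => yleaf 0) Ms i q)
  end.

(* hat M_q(t) for t in T_Sigma(P); for t in T_Sigma this is M_q(t). *)
Fixpoint Mhat (t : itree) : Q -> otree :=
  match t with
  | Node (inr p) _ => fun q => Node (OQP q p) (mkseq yleaf (rk q))
  | Node (inl a) ts => fun q => evalr (map Mhat ts) (rules M q a (map run ts))
  end.

Definition inj (s : tree (sym Sg)) : itree := tmap inl s.

Definition Mq (q : Q) (s : tree (sym Sg)) : otree := Mhat (inj s) q.
Definition Mout (s : tree (sym Sg)) : otree := Mq (q0 M) s.

Definition is_qp (q : Q) (p : P) (l : olab D (st M) P) : bool :=
  match l with OQP q' p' => (q' == q) && (p' == p) | _ => false end.

Definition reachable (q : Q) (p : P) : Prop :=
  exists t : itree, wf ilab_rk t /\ has_label (is_qp q p) (Mhat t (q0 M)).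

(* floor(s)_y : maximal subtrees not containing y_{j+1} replaced by $ (= None) *)
Definition is_y (j : nat) (l : olab D (st M) P) : bool :=
  match l with OY j' => j' == j | _ => false end.

Fixpoint cut (j : nat) (t : otree) : tree (option (olab D (st M) P)) :=
  match t with
  | Node l ts =>
      if has_label (is_y j) t then Node (Some l) (map (cut j) ts)
      else Node None [::]
  end.

(* depth-proper: for reachable <q,p> and y in Y_m, the set
   { floor(M_q(s))_y | s in L_p } is infinite (not covered by any finite list) *)
Definition depth_proper : Prop :=
  forall (q : Q) (p : P), reachable q p ->
  forall j, j < rk q ->
  forall l : seq (tree (option (olab D (st M) P))),
    exists s : tree (sym Sg),
      [/\ wf (@rk Sg) s, run (inj s) = p & ~ List.In (cut j (Mq q s)) l].

Definition is_P (x : sym Sg + P) : bool := if x is inr _ then true else false.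

Definition is_QP (l : olab D (st M) P) : bool := if l is OQP _ _ then true else false.

Definition nesting (pi : seq (olab D (st M) P)) : nat := count is_QP pi.

Definition finite_nesting : Prop :=
  exists b : nat, forall t : itree,
    wf ilab_rk t -> count_label is_P t = 1 ->
    forall pi, List.In pi (paths (Mhat t (q0 M))) -> nesting pi <= b.

Definition LSHI : Prop :=
  exists b : nat, forall t : tree (sym Sg),
    wf (@rk Sg) t -> height (Mout t) <= b * tsize t.

End Semantics.

From Pilot Require Import Defs.
From mathcomp Require Import all_boot.
From Stdlib Require List.

Set Implicit Arguments.
Unset Strict Implicit.
Unset Printing Implicit Defensive.

(* Fix an input tree t and give each of its |t| nodes its own color by
   running the color-tagged copy of M, whose rules paint their output
   symbols with the color of the input symbol they are applied to.  On a
   root-to-leaf path of M(t) every node is an output symbol, so the height of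
   M(t) is at most the sum, over the colors i, of the largest number of
   i-colored nodes on a path.  For one color i, replace the subtree at the
   i-colored input node by a leaf carrying its look-ahead state p.  Every
   i-colored output node then sits inside the image of an occurrence of a
   call <q,p> of the pruned translation, each occurrence accounts for at most
   rhs_max nodes on a path (the size of the largest rule), and finite nesting
   bounds the number of occurrences on a path by b.  Hence
   H(M(t)) <= rhs_max * b * |t|.

   "Number of nodes of a kind on a path" is formalised by the weighted height
   of an output tree, which behaves well under the second-order substitution
   used to evaluate right-hand sides. *)

Section TreeInduction.
Variables (A : Type) (Pr : tree A -> Prop).
Hypothesis IHnode : forall a ts, (forall u, List.In u ts -> Pr u) -> Pr (Node a ts).

Fixpoint tree_ind_in (t : tree A) : Pr t :=
  match t with
  | Node a ts =>
      IHnode a ((fix go (ts : seq (tree A)) : forall u, List.In u ts -> Pr u :=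
        match ts return forall u, List.In u ts -> Pr u with
        | [::] => fun u F => False_ind _ F
        | v :: vs => fun u Hin =>
            match Hin with
            | or_introl E => eq_ind v Pr (tree_ind_in v) u E
            | or_intror H => go vs u H
            end
        end) ts)
  end.
End TreeInduction.

Section ListFacts.
Variable T : Type.
Implicit Types (ts : seq T) (h : T -> nat) (p : pred T).

Lemma foldr_max_ub h ts u : List.In u ts -> h u <= foldr maxn 0 (map h ts).
Proof.
elim: ts => //= v vs IH [<-|Hin]; first by rewrite leq_maxl.
by rewrite (leq_trans (IH Hin)) // leq_maxr.
Qed.

Lemma foldr_max_le h ts B :
  (forall u, List.In u ts -> h u <= B) -> foldr maxn 0 (map h ts) <= B.
Proof.
elim: ts => //= u us IH H; rewrite geq_max H /=; last by left.
by apply: IH => v Hv; apply: H; right.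
Qed.

Lemma foldr_max_mono h h' ts :
  (forall u, List.In u ts -> h u <= h' u) ->
  foldr maxn 0 (map h ts) <= foldr maxn 0 (map h' ts).
Proof.
by move=> H; apply: foldr_max_le => u Hu; apply: leq_trans (H u Hu) (foldr_max_ub h' Hu).
Qed.

Lemma foldr_max_attained h ts :
  ts <> [::] -> exists2 u, List.In u ts & foldr maxn 0 (map h ts) = h u.
Proof.
elim: ts => // v [|w ws] IH _; first by exists v; [left | rewrite /= maxn0].
have [u Hu E] := IH ltac:(done).
change (exists2 u0, List.In u0 (v :: w :: ws) &
  maxn (h v) (foldr maxn 0 (map h (w :: ws))) = h u0).
rewrite E.
by case: (leqP (h u) (h v)) => _; [exists v; [left|] | exists u; [right|]].
Qed.

Lemma sumn_ub h ts u : List.In u ts -> h u <= sumn (map h ts).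
Proof.
elim: ts => //= v vs IH [<-|Hin]; first by rewrite leq_addr.
by rewrite (leq_trans (IH Hin)) // leq_addl.
Qed.

Lemma nth_In (x0 : T) ts j : j < size ts -> List.In (nth x0 ts j) ts.
Proof. by elim: ts j => //= u us IH [|j] /= Hj; [left | right; apply: IH]. Qed.

Lemma all_In p ts u : all p ts -> List.In u ts -> p u.
Proof. by elim: ts => //= v vs IH /andP [Hv Hs] [<-|Hu] //; apply: IH. Qed.

Lemma all_of_In p ts : (forall u, List.In u ts -> p u) -> all p ts.
Proof.
elim: ts => //= u us IH H; rewrite H; last by left.
by apply: IH => v Hv; apply: H; right.
Qed.

Lemma nhas_In p ts u : ~~ has p ts -> List.In u ts -> ~~ p u.
Proof.
elim: ts => //= v vs IH; rewrite negb_or => /andP [Hv Hs] [<-|Hu] //; exact: IH.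
Qed.

Lemma all_ext_In p1 p2 ts :
  (forall u, List.In u ts -> p1 u = p2 u) -> all p1 ts = all p2 ts.
Proof.
elim: ts => //= u us IH H; rewrite H; last by left.
by rewrite IH // => v Hv; apply: H; right.
Qed.

Lemma has_ext_In p1 p2 ts :
  (forall u, List.In u ts -> p1 u = p2 u) -> has p1 ts = has p2 ts.
Proof.
elim: ts => //= u us IH H; rewrite H; last by left.
by rewrite IH // => v Hv; apply: H; right.
Qed.
End ListFacts.

Section Relabel.
Variables (A B : Type) (f : A -> B).

Lemma wf_tmap (rkA : A -> nat) (rkB : B -> nat) t :
  (forall x, rkB (f x) = rkA x) -> wf rkB (tmap f t) = wf rkA t.
Proof.
move=> Hrk; elim/tree_ind_in: t => a ts IH /=.
by rewrite size_map Hrk all_map; congr (_ && _); apply: all_ext_In.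
Qed.

Lemma has_label_tmap (p : B -> bool) t :
  has_label p (tmap f t) = has_label (fun x => p (f x)) t.
Proof.
elim/tree_ind_in: t => a ts IH /=; rewrite has_map; congr (_ || _); exact: has_ext_In.
Qed.

Lemma count_label_tmap (p : B -> bool) t :
  count_label p (tmap f t) = count_label (fun x => p (f x)) t.
Proof.
elim/tree_ind_in: t => a ts IH /=; rewrite -map_comp; congr (_ + _).
by congr sumn; apply: List.map_ext_in.
Qed.

Lemma height_tmap t : height (tmap f t) = height t.
Proof.
elim/tree_ind_in: t => a ts IH /=; rewrite -map_comp.
by congr (foldr _ _ _).+1; apply: List.map_ext_in.
Qed.

Lemma tsize_tmap t : Defs.tsize (tmap f t) = Defs.tsize t.
Proof.
elim/tree_ind_in: t => a ts IH /=; rewrite -map_comp.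
by congr (sumn _).+1; apply: List.map_ext_in.
Qed.

Lemma tmap_comp (C : Type) (g : B -> C) t :
  tmap g (tmap f t) = tmap (fun x => g (f x)) t.
Proof.
elim/tree_ind_in: t => a ts IH /=; rewrite -map_comp; congr Node.
exact: List.map_ext_in.
Qed.
End Relabel.

Lemma has_label_count (A : Type) (p : A -> bool) t :
  has_label p t = (0 < count_label p t).
Proof.
elim/tree_ind_in: t => a ts IH /=; rewrite addn_gt0 lt0b; congr (_ || _).
elim: ts IH => //= u us IHs IH; rewrite addn_gt0 IH; last by left.
by rewrite IHs // => v Hv; apply: IH; right.
Qed.

Lemma eq_count_label (A : Type) (p p' : A -> bool) t :
  p =1 p' -> count_label p t = count_label p' t.
Proof.
move=> Hp; elim/tree_ind_in: t => a ts IH /=; rewrite Hp; congr (_ + sumn _).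
exact: List.map_ext_in.
Qed.

Lemma has_label_pred0 (A : Type) (p : A -> bool) t :
  (forall x, p x = false) -> has_label p t = false.
Proof.
move=> p0; elim/tree_ind_in: t => a ts IH /=; rewrite p0 /=.
elim: ts IH => //= u us IHs IH; rewrite IH; last by left.
by apply: IHs => v Hv; apply: IH; right.
Qed.

Lemma tsize_gt0 (A : Type) (t : tree A) : 0 < Defs.tsize t.
Proof. by case: t. Qed.

Lemma paths_cons (A : Type) (l : A) ts v pi : List.In v ts -> List.In pi (paths v) ->
  List.In (l :: pi) (paths (Node l ts)).
Proof.
case: ts => // u us Hv Hpi; apply: List.in_map.
elim: (u :: us) Hv => //= w ws IHw [Ew|Hv]; apply: List.in_or_app.
  by left; rewrite Ew.
by right; apply: IHw.
Qed.

(* With g = 0 it bounds how many nodes of a given kind occur on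
   one path; a general g makes it compositional under substitution. *)
Section WeightedHeight.
Variables (D Q : ranked) (P : Type).
Local Notation L := (olab D Q P).
Implicit Types (W : L -> nat) (g : nat -> nat) (t : tree L).

Fixpoint wheight W g t : nat :=
  match t with
  | Node (OY j) _ => g j
  | Node l ts => W l + foldr maxn 0 (map (wheight W g) ts)
  end.

Definition is_param (l : L) : bool := if l is OY _ then true else false.

Lemma wheight_mono W W' g g' t :
  (forall l, ~~ is_param l -> W l <= W' l) -> (forall j, g j <= g' j) ->
  wheight W g t <= wheight W' g' t.
Proof.
move=> HW Hg; elim/tree_ind_in: t => [[d|q p|j] ts IH] //=;
  by rewrite leq_add ?HW // foldr_max_mono.
Qed.

Lemma wheight_add W W' t :
  wheight (fun l => W l + W' l) (fun _ => 0) t <=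
  wheight W (fun _ => 0) t + wheight W' (fun _ => 0) t.
Proof.
elim/tree_ind_in: t => [[d|q p|j] ts IH] //=;
  rewrite addnACA leq_add2l; apply: foldr_max_le => u Hu;
  by apply: leq_trans (IH u Hu) _; apply: leq_add; apply: foldr_max_ub.
Qed.

Lemma wheight_sum (I : finType) (W : I -> L -> nat) t :
  wheight (fun l => \sum_i W i l) (fun _ => 0) t <=
  \sum_i wheight (W i) (fun _ => 0) t.
Proof.
elim/tree_ind_in: t => [[d|q p|j] ts IH] /=; last by rewrite big1.
all: rewrite big_split /= leq_add2l; apply: foldr_max_le => u Hu;
  apply: leq_trans (IH u Hu) _; apply: leq_sum => i _;
  exact: (foldr_max_ub (wheight (W i) _)).
Qed.

Lemma wheight_scale K W t :
  wheight (fun l => K * W l) (fun _ => 0) t <= K * wheight W (fun _ => 0) t.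
Proof.
elim/tree_ind_in: t => [[d|q p|j] ts IH] /=; rewrite ?muln0 //;
  rewrite mulnDr leq_add2l; apply: foldr_max_le => u Hu;
  by apply: leq_trans (IH u Hu) _; rewrite leq_mul2l (foldr_max_ub _ Hu) orbT.
Qed.

Lemma height_wheight t : wheight (fun _ => 0) (fun _ => 1) t = 0 ->
  height t = wheight (fun _ => 1) (fun _ => 0) t.
Proof.
elim/tree_ind_in: t => [[d|q p|j] ts IH] //=; rewrite add0n add1n => Ht;
  congr (foldr _ _ _).+1; apply: List.map_ext_in => u Hu; apply: IH => //;
  by have := foldr_max_ub (wheight (fun _ => 0) (fun _ => 1)) Hu;
     rewrite Ht leqn0 => /eqP.
Qed.

Lemma wheight_path (f : L -> bool) t : exists2 pi, List.In pi (paths t) &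
  wheight (fun l => f l) (fun _ => 0) t <= count f pi.
Proof.
elim/tree_ind_in: t => l [|u us] IH.
  by exists [:: l]; [left | case: l => //= *; rewrite addn0].
have [v Hv E] := foldr_max_attained (wheight (fun l => f l) (fun _ => 0))
  (ltac:(done) : u :: us <> [::]).
have [pi Hpi Hle] := IH v Hv.
exists (l :: pi); first exact: paths_cons Hv Hpi.
by case: l E => [d|q p|j] //= ->; rewrite leq_add2l.
Qed.
End WeightedHeight.

Section TranslationBounds.
Variables (Sg D : ranked) (M : mttr Sg D).
Local Notation Q := (sym (st M)).
Local Notation P := (la M).
Local Notation L := (olab D (st M) P).
Local Notation otree := (tree L).
Local Notation rtree := (tree (rlab D (st M))).
Local Notation nocall := (fun _ : Q => yleaf M 0).
Implicit Types (W : L -> nat) (g : nat -> nat).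

Lemma wheight_subst W g f (T : otree) :
  wheight W g (subst f T) = wheight W (fun j => wheight W g (f j)) T.
Proof.
elim/tree_ind_in: T => [[d|q p|j] ts IH] //=; congr (_ + foldr _ _ _);
  rewrite -map_comp; exact: List.map_ext_in.
Qed.

Lemma wheight_evalr_mono W1 W2 g (Ms1 Ms2 : seq (Q -> otree)) r :
  (forall l, W1 l <= W2 l) ->
  (forall i q g, wheight W1 g (nth nocall Ms1 i q) <= wheight W2 g (nth nocall Ms2 i q)) ->
  wheight W1 g (evalr Ms1 r) <= wheight W2 g (evalr Ms2 r).
Proof.
move=> HW HMs; elim/tree_ind_in: r => [[d|q i|j] ts IH] //=.
  rewrite leq_add // -!map_comp; apply: foldr_max_mono => u Hu; exact: IH.
rewrite !wheight_subst; apply: leq_trans (HMs i q _) _.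
apply: wheight_mono => // j; case: (ltnP j (size ts)) => Hj.
  by rewrite !(nth_map (Node (RY 0) [::])) //; apply/IH/nth_In.
by rewrite !nth_default ?size_map.
Qed.

Definition rhs_light W e (r : rtree) : bool :=
  ~~ has_label (fun l => if l is RD d then e < W (OD d) else false) r.

Lemma wheight_evalr_bound W e (Ms : seq (Q -> otree)) k m g r :
  (forall i q g, i < k -> wheight W g (nth nocall Ms i q) <= \max_(j < rk q) g j) ->
  wf_rhs k m r -> rhs_light W e r ->
  wheight W g (evalr Ms r) <= e * Defs.tsize r + \max_(j < m) g j.
Proof.
move=> HMs; elim/tree_ind_in: r g => [[d|q i|j] ts IH] g /=.
- move=> /andP [_ Hall]; rewrite /rhs_light /= negb_or -ltnNge => /andP [Hd Hn].
  rewrite mulnS -addnA leq_add // -map_comp; apply: foldr_max_le => u Hu /=.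
  apply: leq_trans (IH u Hu g (all_In Hall Hu) (nhas_In Hn Hu)) _.
  by rewrite leq_add2r leq_mul2l sumn_ub ?orbT.
- move=> /andP [/andP [Hi /eqP Hs] Hall] Hn.
  rewrite wheight_subst; apply: leq_trans (HMs i q _ Hi) _.
  apply/bigmax_leqP => /= -[j Hj] _ /=; rewrite -Hs in Hj.
  have Hu := nth_In (Node (RY 0) [::]) Hj.
  rewrite (nth_map (Node (RY 0) [::])) //.
  apply: leq_trans (IH _ Hu g (all_In Hall Hu) (nhas_In Hn Hu)) _.
  rewrite leq_add2r leq_mul2l ltnW ?orbT // ltnS.
  exact: (sumn_ub (@Defs.tsize _) Hu).
- move=> /andP [Hj _] _.
  apply: leq_trans (leq_addl _ _).
  exact: (leq_bigmax (F := fun j : 'I_m => g j) (Ordinal Hj)).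
Qed.

Local Notation itree := (itree M).
Local Notation wfi := (wf (@ilab_rk _ _ M)).
Local Notation run := (@run _ _ M).

Lemma wheight_call W g q p :
  wheight W g (Node (OQP q p) (mkseq (yleaf M) (rk q))) =
  W (OQP q p) + \max_(j < rk q) g j.
Proof.
by rewrite /= /mkseq -map_comp foldrE big_map -(big_mkord xpredT) /index_iota subn0.
Qed.

Definition weightless W (T : Q -> otree) : Prop :=
  forall q g, wheight W g (T q) <= \max_(j < rk q) g j.

Lemma wheight_Mhat_node W e a ts q g :
  wfi (Node (inl a) ts) -> (forall u, List.In u ts -> weightless W (Mhat u)) ->
  rhs_light W e (rules M q a (map run ts)) ->
  wheight W g (Mhat (Node (inl a) ts) q) <=
  e * Defs.tsize (rules M q a (map run ts)) + \max_(j < rk q) g j.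
Proof.
move=> /= /andP [/eqP Hsz _] Hts; apply: (wheight_evalr_bound (k := rk a)).
- move=> i q' g' Hi; rewrite -Hsz in Hi.
  by rewrite (nth_map (Node (inl a) [::])) //; apply/Hts/nth_In.
- by apply: rules_wf; rewrite size_map.
Qed.

Section Weightless.
Variables (W : L -> nat) (bad : sym Sg + P -> bool).
Hypothesis light_rules : forall a q ps, ~~ bad (inl a) -> rhs_light W 0 (rules M q a ps).
Hypothesis light_calls : forall p q, ~~ bad (inr p) -> W (OQP q p) = 0.

Lemma Mhat_weightless t : wfi t -> ~~ has_label bad t -> weightless W (Mhat t).
Proof.
elim/tree_ind_in: t => [[a|p] ts IH] /=; rewrite negb_or => Hwf /andP [Hok Hn] q g.
  have := wheight_Mhat_node g Hwf _ (light_rules q (map run ts) Hok).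
  rewrite mul0n; apply=> u Hu; move: Hwf => /andP [_ Hall].
  exact: IH u Hu (all_In Hall Hu) (nhas_In Hn Hu).
by rewrite wheight_call light_calls.
Qed.

Lemma wheight_Mhat_root a ts q g :
  (forall q ps, rhs_light W 1 (rules M q a ps)) ->
  wfi (Node (inl a) ts) -> all (fun u => ~~ has_label bad u) ts ->
  wheight W g (Mhat (Node (inl a) ts) q) <=
  Defs.tsize (rules M q a (map run ts)) + \max_(j < rk q) g j.
Proof.
move=> Ha Hwf Hn; rewrite -[X in X + _]mul1n; apply: wheight_Mhat_node => // u Hu.
move: Hwf => /andP [_ Hall].
by apply: Mhat_weightless; [apply: all_In Hall Hu | apply: all_In Hn Hu].
Qed.
End Weightless.
End TranslationBounds.

(* Pruning at a single marked
   node turns each translation step of that node into one call <q,p>. *)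
Section Pruning.
Variables (Sg D : ranked) (M : mttr Sg D) (marked : sym Sg -> bool).
Local Notation P := (la M).
Local Notation L := (olab D (st M) P).
Local Notation itree := (itree M).
Local Notation wfi := (wf (@ilab_rk _ _ M)).
Local Notation run := (@run _ _ M).

Definition is_marked (x : sym Sg + P) : bool := if x is inl a then marked a else false.

Fixpoint prune (t : itree) : itree :=
  match t with
  | Node (inl a) ts =>
      if marked a then Node (inr (run t)) [::] else Node (inl a) (map prune ts)
  | _ => t
  end.

Lemma run_prune t : run (prune t) = run t.
Proof.
elim/tree_ind_in: t => [[a|p] ts IH] //=; case: (marked a) => //=.
by rewrite -map_comp; congr (lah _ _ _); apply: List.map_ext_in.
Qed.

Lemma wf_prune t : wfi t -> wfi (prune t).
Proof.
elim/tree_ind_in: t => [[a|p] ts IH] //=; case: (marked a) => //= /andP [Hs Ha].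
by rewrite size_map Hs all_map; apply: all_of_In => u Hu; apply/IH/(all_In Ha).
Qed.

Lemma prune_unmarked t : wfi t -> ~~ has_label is_marked (prune t).
Proof.
elim/tree_ind_in: t => [[a|p] ts IH] /= /andP [Hs Hall]; last by rewrite (size0nil (eqP Hs)).
case Hm: (marked a) => //=; rewrite Hm -all_predC all_map.
by apply: all_of_In => u Hu /=; apply/IH/(all_In Hall).
Qed.

Lemma count_prune t : ~~ has_label (@is_P _ _ M) t -> count_label is_marked t <= 1 ->
  count_label (@is_P _ _ M) (prune t) = count_label is_marked t.
Proof.
elim/tree_ind_in: t => [[a|p] ts IH] //=; case Hm: (marked a) => /= HnP Hc.
  by move: Hc; rewrite add1n ltnS leqn0 => /eqP ->.
rewrite -map_comp; congr (_ + _); congr sumn; apply: List.map_ext_in => u Hu /=.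
by apply: IH; [| exact: nhas_In HnP Hu | exact: leq_trans (sumn_ub _ Hu) Hc].
Qed.

Lemma wheight_Mhat_prune (W1 W2 : L -> nat) K t :
  (forall l, W1 l <= W2 l) -> (forall q p, K <= W2 (OQP q p)) ->
  (forall a ts q g, marked a -> wfi (Node (inl a) ts) ->
     all (fun u => ~~ has_label is_marked u) ts ->
     wheight W1 g (Mhat (Node (inl a) ts) q) <= K + \max_(j < rk q) g j) ->
  wfi t -> count_label is_marked t <= 1 ->
  forall q g, wheight W1 g (Mhat t q) <= wheight W2 g (Mhat (prune t) q).
Proof.
move=> HW HK Hroot; elim/tree_ind_in: t => [[a|p] ts IH] Hwf Hc q g; last first.
  by apply: wheight_mono.
case Hm: (marked a); move: Hc; rewrite /= Hm => Hc.
  have Hts : all (fun u => ~~ has_label is_marked u) ts.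
    apply: all_of_In => u Hu; rewrite has_label_count -leqNgt.
    by apply: leq_trans (sumn_ub _ Hu) _; move: Hc; rewrite add1n ltnS.
  apply: leq_trans (Hroot a ts q g Hm Hwf Hts) _.
  by rewrite wheight_call leq_add2r.
move: Hwf => /andP [_ Hall] /=.
have -> : map run (map prune ts) = map run ts.
  by rewrite -map_comp; apply: eq_map => u; apply: run_prune.
apply: wheight_evalr_mono => // i q' g'.
case: (ltnP i (size ts)) => Hi; last by rewrite !nth_default ?size_map.
rewrite !(nth_map (Node (inl a) [::])) ?size_map //.
have Hu := nth_In (Node (inl a) [::]) Hi.
by apply: IH (all_In Hall Hu) (leq_trans (sumn_ub _ Hu) Hc) q' g'.
Qed.
End Pruning.

(* The color-tagged copy of M: input and output symbols carry a color from
   'I_N, and the output symbols of a rule receive the color of the input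
   symbol it is applied to, so each output node records its origin. *)
Section Coloring.
Variables (Sg D : ranked) (M : mttr Sg D) (N : nat).

Definition colored (A : ranked) : ranked :=
  Ranked (fun x : (sym A * 'I_N)%type => rk x.1).

Definition paint (c : 'I_N) (l : rlab D (st M)) : rlab (colored D) (st M) :=
  match l with RD d => RD ((d, c) : sym (colored D)) | RQ q i => RQ q i | RY j => RY j end.

Lemma wf_rhs_paint c k m r : wf_rhs k m (tmap (paint c) r) = wf_rhs k m r.
Proof.
elim/tree_ind_in: r => [[d|q i|j] ts IH] /=; rewrite ?size_map ?all_map //;
  by congr (_ && _); apply: all_ext_In.
Qed.

Definition painted_rules q (a : sym (colored Sg)) ps := tmap (paint a.2) (rules M q a.1 ps).

Lemma painted_rules_wf q a ps :
  size ps = rk a -> wf_rhs (rk a) (rk q) (painted_rules q a ps).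
Proof. by move=> Hps; rewrite wf_rhs_paint; apply: rules_wf. Qed.

Definition Mcol : mttr (colored Sg) (colored D) :=
  @Mttr (colored Sg) (colored D) (st M) (la M) (fun a ps => lah M a.1 ps)
    (q0 M) painted_rules (q0_rk M) painted_rules_wf.
End Coloring.

Section Erasure.
Variables (Sg D : ranked) (M : mttr Sg D) (N : nat).
Local Notation Mc := (Mcol M N).
Local Notation Q := (sym (st M)).
Local Notation P := (la M).
Local Notation Dc := (colored N D).

Definition erase (l : olab Dc (st M) P) : olab D (st M) P :=
  match l with OD d => OD d.1 | OQP q p => OQP q p | OY j => OY j end.

Definition uncolor (x : sym (colored N Sg) + P) : sym Sg + P :=
  match x with inl a => inl a.1 | inr p => inr p end.

Lemma run_uncolor (t : itree Mc) : run t = run (M := M) (tmap uncolor t).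
Proof.
elim/tree_ind_in: t => [[a|p] ts IH] //=; rewrite -map_comp; congr (lah _ _ _).
exact: List.map_ext_in.
Qed.

Lemma subst_ext f g (T : tree (olab D (st M) P)) :
  f =1 g -> subst (M := M) f T = subst g T.
Proof.
by move=> Hfg; elim/tree_ind_in: T => [[d|q p|j] ts IH] //=; congr Node;
  apply: List.map_ext_in.
Qed.

Lemma subst_erase f (T : tree (olab Dc (st M) P)) :
  tmap erase (subst (M := Mc) f T) = subst (M := M) (fun j => tmap erase (f j)) (tmap erase T).
Proof.
elim/tree_ind_in: T => [[d|q p|j] ts IH] //=; rewrite -!map_comp; congr Node;
  exact: List.map_ext_in.
Qed.

Lemma evalr_erase (Msc : seq (Q -> tree (olab Dc (st M) P)))
  (Ms : seq (Q -> tree (olab D (st M) P))) c r :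
  (forall i q, tmap erase (nth (fun _ => yleaf Mc 0) Msc i q) =
               nth (fun _ => yleaf M 0) Ms i q) ->
  tmap erase (evalr (M := Mc) Msc (tmap (paint (M := M) c) r)) = evalr (M := M) Ms r.
Proof.
move=> HMs; elim/tree_ind_in: r => [[d|q i|j] ts IH] //=.
  by rewrite -!map_comp; congr Node; apply: List.map_ext_in.
rewrite subst_erase HMs; apply: subst_ext => j.
case: (ltnP j (size ts)) => Hj; last by rewrite !nth_default ?size_map.
rewrite !(nth_map (Node (RY 0) [::])) ?size_map //; exact/IH/nth_In.
Qed.

Lemma Mhat_erase (t : itree Mc) q : tmap erase (Mhat t q) = Mhat (M := M) (tmap uncolor t) q.
Proof.
elim/tree_ind_in: t q => [[a|p] ts IH] q /=; last by rewrite /mkseq -!map_comp.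
rewrite /painted_rules -!map_comp (eq_map run_uncolor).
apply: evalr_erase => i q'.
case: (ltnP i (size ts)) => Hi; last by rewrite !nth_default ?size_map.
by rewrite !(nth_map (Node (inl a) [::])) //; apply/IH/nth_In.
Qed.

Lemma wheight_erase W g (T : tree (olab Dc (st M) P)) :
  wheight W g (tmap erase T) = wheight (fun l => W (erase l)) g T.
Proof.
elim/tree_ind_in: T => [[d|q p|j] ts IH] //=; rewrite -map_comp;
  by congr (_ + foldr _ _ _); apply: List.map_ext_in.
Qed.
End Erasure.

Fixpoint number (A : Type) (t : tree A) (n : nat) : tree (A * nat) :=
  match t with
  | Node a ts => Node (a, n)
      ((fix go (ts : seq (tree A)) (m : nat) : seq (tree (A * nat)) :=
          match ts with
          | [::] => [::]
          | u :: us => number u m :: go us (m + Defs.tsize u)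
          end) ts n.+1)
  end.

Lemma count_number (A : Type) (pk : pred nat) (t : tree A) n :
  count_label (fun x => pk x.2) (number t n) = count pk (iota n (Defs.tsize t)).
Proof.
elim/tree_ind_in: t n => a ts IH n /=; congr (_ + _).
elim: ts n.+1 IH => //= u us IHs m IH.
rewrite iotaD count_cat IH; last by left.
by rewrite IHs // => v Hv; apply: IH; right.
Qed.

Lemma number_erase (A : Type) (t : tree A) n : tmap fst (number t n) = t.
Proof.
elim/tree_ind_in: t n => a ts IH n /=; congr Node.
elim: ts n.+1 IH => //= u us IHs m IH.
rewrite IH; last by left.
by rewrite IHs // => v Hv; apply: IH; right.
Qed.

Section ColorBounds.
Variables (Sg D : ranked) (M : mttr Sg D) (N : nat).
Local Notation Q := (sym (st M)).
Local Notation P := (la M).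
Local Notation Mc := (Mcol M N).
Local Notation erase := (@erase _ _ M N).
Local Notation uncolor := (@uncolor _ _ M N).
Local Notation Qc := (sym (st Mc)).
Local Notation Pc := (la Mc).
Local Notation Lc := (olab (colored N D) (st M) P).
Local Notation wfc := (wf (@ilab_rk _ _ Mc)).
Local Notation is_Pc := (@is_P _ _ Mc).

Definition rhs_max : nat := \max_(q : Q) \max_(a : sym Sg)
  \max_(ps : (rk a).-tuple P) Defs.tsize (rules M q a ps).

Lemma rhs_max_ge q a ps : size ps = rk a -> Defs.tsize (rules M q a ps) <= rhs_max.
Proof.
move=> /eqP Hps; pose tps : (rk a).-tuple P := Tuple Hps.
apply: leq_trans (leq_bigmax q); apply: leq_trans (leq_bigmax a).
exact: (leq_bigmax (F := fun ps : (rk a).-tuple P => Defs.tsize (rules M q a ps)) tps).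
Qed.

Definition color_weight (i : 'I_N) (l : Lc) : nat := if l is OD d then d.2 == i else 0.

Definition call_weight (l : Lc) : nat := if l is OQP _ _ then 1 else 0.

Definition has_color (i : 'I_N) (a : sym (colored N Sg)) : bool := a.2 == i.

Lemma painted_light (W : Lc -> nat) e (q : Q) (a : sym (colored N Sg)) (ps : seq P) :
  (forall d : sym D, W (OD ((d, a.2) : sym (colored N D))) <= e) ->
  rhs_light (M := Mc) W e (rules Mc q a ps).
Proof.
move=> HW; rewrite /rhs_light /= /painted_rules has_label_tmap.
by rewrite has_label_pred0 // => -[d|q' j|j] //=; rewrite ltnNge HW.
Qed.

Section OneColor.
Variable i : 'I_N.
Local Notation marked := (@is_marked _ _ Mc (has_color i)).

Lemma uncolored_weightless t : wfc t -> ~~ has_label marked t ->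
  weightless (M := Mc) (color_weight i) (Mhat t).
Proof.
apply: Mhat_weightless => // a q ps; rewrite /= /has_color => Ha.
by apply: painted_light => d /=; case: (_ == _) Ha.
Qed.

Lemma color_root_bound a ts q g : has_color i a -> wfc (Node (inl a) ts) ->
  all (fun u => ~~ has_label marked u) ts ->
  wheight (color_weight i) g (Mhat (Node (inl a) ts) q) <= rhs_max + \max_(j < rk q) g j.
Proof.
move=> Ha Hwf Hts.
have light_rules : forall (a' : sym (colored N Sg)) (q' : Qc) (ps : seq Pc),
    ~~ marked (inl a') ->
    rhs_light (M := Mc) (color_weight i) 0 (rules Mc q' a' ps).
  move=> a' q' ps Ha'; apply: painted_light => d /=.
  by move: Ha'; rewrite /= /has_color; case: (_ == _).
have light_root : forall (q' : Qc) (ps : seq Pc),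
    rhs_light (M := Mc) (color_weight i) 1 (rules Mc q' a ps).
  by move=> q' ps; apply: painted_light => d /=; case: (_ == _).
apply: leq_trans (wheight_Mhat_root light_rules (fun _ _ _ => erefl) q g light_root Hwf Hts) _.
rewrite leq_add2r /= /painted_rules tsize_tmap rhs_max_ge // size_map.
by move: Hwf => /= /andP [/eqP -> _].
Qed.

Variable b : nat.
Hypothesis nesting_b : forall t : itree M, wf (@ilab_rk _ _ M) t ->
  count_label (@is_P _ _ M) t = 1 ->
  forall pi, List.In pi (paths (Mhat t (q0 M))) -> nesting pi <= b.

(* Finite nesting, transported to the color-tagged copy. *)
Lemma calls_bound t : wfc t -> count_label is_Pc t = 1 ->
  wheight call_weight (fun _ => 0) (Mhat t (q0 Mc)) <= b.
Proof.
move=> Hwf Hc.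
have -> : wheight call_weight (fun _ => 0) (Mhat t (q0 Mc)) =
          wheight (fun l => @is_QP _ _ M l) (fun _ => 0) (tmap erase (Mhat t (q0 Mc))).
  by rewrite wheight_erase; apply/eqP; rewrite eqn_leq !wheight_mono // => -[].
rewrite Mhat_erase.
have [pi Hpi Hle] := wheight_path (@is_QP _ _ M) (Mhat (tmap uncolor t) (q0 M)).
apply: leq_trans Hle (nesting_b _ _ Hpi).
  by rewrite (wf_tmap (rkA := @ilab_rk _ _ Mc)) // => -[].
by rewrite count_label_tmap -Hc; apply: eq_count_label => -[].
Qed.

(* Each occurrence of the call for the i-colored node on a path accounts for
   at most rhs_max i-colored output nodes, and finite nesting bounds the
   number of these occurrences. *)
Lemma color_bound t : wfc t -> ~~ has_label is_Pc t -> count_label marked t = 1 ->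
  wheight (color_weight i) (fun _ => 0) (Mhat t (q0 Mc)) <= rhs_max * b.
Proof.
move=> Hwf HnP Hc; pose t' := prune (has_color i) t.
have Hwf' : wfc t' := wf_prune (has_color i) Hwf.
apply: leq_trans (wheight_Mhat_prune (M := Mc)
  (W2 := fun l => color_weight i l + rhs_max * call_weight l) _ _ (@color_root_bound)
  Hwf (eq_leq Hc) _ _) _.
- by move=> l; rewrite leq_addr.
- by move=> q p; rewrite /= add0n muln1.
apply: leq_trans (wheight_add _ _ _) _.
have -> : wheight (color_weight i) (fun _ => 0) (Mhat t' (q0 Mc)) = 0.
  apply/eqP; rewrite -leqn0.
  apply: leq_trans (uncolored_weightless Hwf' (prune_unmarked (has_color i) Hwf) _ _) _.
  by rewrite big1_eq.
apply: leq_trans (wheight_scale _ _ _) _; rewrite leq_mul2l calls_bound ?orbT //.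
by rewrite count_prune ?Hc.
Qed.
End OneColor.

(* Without P-leaves in the input and without parameters at the initial
   state, every node on a path of the translation is an output symbol, and
   each output symbol has exactly one color. *)
Lemma height_le_colors t : wfc t -> ~~ has_label is_Pc t ->
  height (Mhat t (q0 Mc)) <=
  \sum_(i < N) wheight (color_weight i) (fun _ => 0) (Mhat t (q0 Mc)).
Proof.
move=> Hwf HnP.
have unweighted (W : Lc -> nat) (a : sym (colored N Sg)) (q : Qc) (ps : seq Pc) :
    (forall d, W (OD d) = 0) -> rhs_light (M := Mc) W 0 (rules Mc q a ps).
  by move=> HW; apply: painted_light => d; rewrite HW.
have no_params : wheight (fun _ => 0) (fun _ => 1) (Mhat t (q0 Mc)) = 0.
  apply/eqP; rewrite -leqn0.
  have := Mhat_weightless (M := Mc) (bad := fun _ => false) (W := fun _ : Lc => 0)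
    (fun a q ps _ => unweighted _ a q ps (fun _ => erefl)) (fun _ _ _ => erefl) Hwf
    (negbT (has_label_pred0 t (fun _ => erefl))) (q0 Mc) (fun _ => 1).
  by rewrite (q0_rk Mc) big_ord0.
have no_calls : wheight call_weight (fun _ => 0) (Mhat t (q0 Mc)) = 0.
  apply/eqP; rewrite -leqn0.
  have := Mhat_weightless (M := Mc) (bad := is_Pc) (W := call_weight)
    (fun a q ps _ => unweighted _ a q ps (fun _ => erefl))
    (fun p q Hp => False_ind _ (negP Hp isT))
    Hwf HnP (q0 Mc) (fun _ => 0).
  by rewrite big1_eq.
rewrite height_wheight //.
apply: leq_trans (wheight_mono (W' := fun l : Lc => \sum_i color_weight i l + call_weight l)
  (g' := fun _ => 0) _ _ _) _.
- case=> [[d c]|q p|j] //= _; last by rewrite addn1.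
  by rewrite (bigD1 c) //= eqxx.
- by [].
apply: leq_trans (wheight_add _ _ _) _; rewrite no_calls addn0; exact: wheight_sum.
Qed.
End ColorBounds.

Section ColoredInput.
Variables (Sg D : ranked) (M : mttr Sg D) (t : tree (sym Sg)).
Local Notation N := (Defs.tsize t).-1.
Local Notation Mc := (Mcol M N.+1).

Definition color_input : itree Mc :=
  tmap (fun x => inl ((x.1, inord x.2) : sym (colored N.+1 Sg))) (number t 0).

Lemma uncolor_color_input : tmap (@uncolor _ _ M N.+1) color_input = inj M t.
Proof. by rewrite /color_input tmap_comp /inj -[in RHS](number_erase t 0) tmap_comp. Qed.

Lemma wf_color_input : wf (@rk Sg) t -> wf (@ilab_rk _ _ Mc) color_input.
Proof.
move=> Ht; rewrite -(wf_tmap (f := @uncolor _ _ M N.+1) (rkA := @ilab_rk _ _ Mc)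
  (rkB := @ilab_rk _ _ M)) => [|[]] //.
by rewrite uncolor_color_input /inj (wf_tmap (rkA := @rk Sg)).
Qed.

Lemma color_input_noP : ~~ has_label (@is_P _ _ Mc) color_input.
Proof. by rewrite has_label_tmap has_label_pred0. Qed.

Lemma color_input_once (i : 'I_N.+1) :
  count_label (@is_marked _ _ Mc (has_color i)) color_input = 1.
Proof.
have HN : N.+1 = Defs.tsize t := prednK (tsize_gt0 t).
rewrite count_label_tmap (eq_count_label _ (p' := fun x => inord x.2 == i)) //.
rewrite (count_number (fun c => inord c == i)).
rewrite (eq_in_count (a2 := pred1 (val i))) => [|c]; last first.
  rewrite mem_iota add0n => /andP [_ Hc] /=.
  by rewrite -(inj_eq val_inj) /= inordK // HN.
by rewrite count_uniq_mem ?iota_uniq // mem_iota add0n (leq_trans (ltn_ord i)) // HN.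
Qed.
End ColoredInput.

Theorem mainTheorem4 (Sg D : ranked) (M : mttr Sg D) :
  depth_proper M -> finite_nesting M -> LSHI M.
Proof.
move=> _ [b Hb]; exists (rhs_max M * b) => t Ht.
rewrite /Mout /Mq -(uncolor_color_input M t) -Mhat_erase height_tmap.
move: (height_le_colors (wf_color_input M Ht) (color_input_noP M t)) => /leq_trans; apply.
apply: (@leq_trans (\sum_(i < (Defs.tsize t).-1.+1) rhs_max M * b)).
  apply: leq_sum => i _; apply: (color_bound Hb).
  - exact: wf_color_input.
  - exact: color_input_noP.
  - exact: color_input_once.
by rewrite sum_nat_const card_ord prednK ?tsize_gt0 // mulnC.
Qed.
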